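(* Let $G$ be a finite group, $D$ a Dedekind domain of characteristic $0$, and $A$ a $DG$-module which is a $P$-module for some maximal ideal $P$ of $D$. If $\mathrm{char}(D/P)=0$ and $\mathrm{sr}_{DG}(A)=r\in\mathbb{N}$, then $A$ is an Artinian $D$-module.
   Context: $A$ is a $P$-module if for every $a\in A$ there is $n\in\mathbb{N}$ with $aP^n=0$. A generating subset of a submodule is minimal if no proper subset generates it; $\mathrm{sr}_{DG}(A)=r$ means every finitely generated $DG$-submodule of $A$ can be generated by $r$ elements and some finitely generated $DG$-submodule has a minimal generating subset of exactly $r$ elements. *)

From HB Require Import structures.
From mathcomp Require Import all_boot all_order all_algebra fingroup fraction.
Set Implicit Arguments. Unset Strict Implicit. Unset Printing Implicit Defensive.
Import Order.TTheory GRing.Theory.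
Local Open Scope ring_scope.

Section RingDefs.
Variable D : idomainType.

Definition ideal (I : D -> Prop) : Prop :=
  [/\ I 0, (forall x y, I x -> I y -> I (x - y)) & (forall r x, I x -> I (r * x))].

Definition proper_ideal (I : D -> Prop) : Prop := ideal I /\ ~ I 1.

Definition prime_ideal (I : D -> Prop) : Prop :=
  proper_ideal I /\ (forall x y, I (x * y) -> I x \/ I y).

Definition maximal_ideal (I : D -> Prop) : Prop :=
  proper_ideal I /\
  (forall J, ideal J -> (forall x, I x -> J x) -> (forall x, J x <-> I x) \/ J 1).

Definition ideal_gen (s : seq D) (x : D) : Prop :=
  exists c : seq D, x = \sum_(i < size s) c`_i * s`_i.

Definition noetherian_ring : Prop :=
  forall I, ideal I -> exists s : seq D, forall x, I x <-> ideal_gen s x.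

Definition integrally_closed : Prop :=
  forall x : {fraction D},
    (exists p : {poly D}, p \is monic /\ root (map_poly (@FracField.tofrac D) p) x) ->
    exists d : D, x = FracField.tofrac d.

Definition dedekind_domain : Prop :=
  [/\ noetherian_ring, integrally_closed &
      forall I, prime_ideal I -> (exists x, I x /\ x != 0) -> maximal_ideal I].

(* char(D/P) = 0 : no positive integer n maps to 0 in D/P, i.e. n%:R \notin P. *)
Definition quot_char0 (P : D -> Prop) : Prop := forall n : nat, ~ P (n.+1)%:R.

End RingDefs.

Section ModDefs.
Variables (gT : finGroupType) (D : idomainType) (A : lmodType D).
Variable act : gT -> A -> A.

Definition DG_module : Prop :=
  [/\ forall g x y, act g (x + y) = act g x + act g y,
      forall g (d : D) x, act g (d *: x) = d *: act g x,
      forall x, act 1%g x = x &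
      forall g h x, act (g * h)%g x = act g (act h x)].

Definition Dsubmodule (B : A -> Prop) : Prop :=
  [/\ B 0, (forall x y, B x -> B y -> B (x + y)) & (forall (d : D) x, B x -> B (d *: x))].

Definition DGsubmodule (B : A -> Prop) : Prop :=
  Dsubmodule B /\ (forall g x, B x -> B (act g x)).

Definition DGgen (s : seq A) (x : A) : Prop :=
  forall B, DGsubmodule B -> (forall y, y \in s -> B y) -> B x.

Definition generates (s : seq A) (B : A -> Prop) : Prop :=
  forall x, DGgen s x <-> B x.

Definition minimal_generating (s : seq A) (B : A -> Prop) : Prop :=
  generates s B /\
  forall t : seq A, {subset t <= s} -> ~ {subset s <= t} -> ~ generates t B.

Definition special_rank_DG (r : nat) : Prop :=
  (forall s : seq A, exists t : seq A, size t <= r /\ generates t (DGgen s))%N /\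
  (exists s t : seq A, uniq t /\ size t = r /\ minimal_generating t (DGgen s)).

(* A is a P-module: every a is annihilated by P^n for some n
   (P^n is additively generated by products of n elements of P). *)
Definition P_module (P : D -> Prop) : Prop :=
  forall a : A, exists n : nat, forall ps : seq D,
    size ps = n -> (forall p, p \in ps -> P p) -> (\prod_(p <- ps) p) *: a = 0.

Definition artinian_Dmodule : Prop :=
  forall B : nat -> A -> Prop,
    (forall n, Dsubmodule (B n)) ->
    (forall n x, B n.+1 x -> B n x) ->
    exists N, forall m, (N <= m)%N -> forall x, B m x <-> B N x.

End ModDefs.

From HB Require Import structures.
From mathcomp Require Import all_boot all_order all_algebra fingroup fraction generic_quotient.
From mathcomp Require Import boolp ring.
Set Implicit Arguments. Unset Strict Implicit. Unset Printing Implicit Defensive.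
Import Order.TTheory GRing.Theory.
Local Open Scope ring_scope.

(* Localized at P, the Dedekind domain D becomes a discrete valuation ring: there is a
   uniformizer pi with P D_P = pi D_P, and by Krull no nonzero element of D is divisible
   in D_P by every power of pi.  Hence elements of a module that are linearly independent
   modulo P and lie in the D-span of M elements are at most M in number: more than M
   coefficient vectors in D^M satisfy a nonzero D-linear relation (found over the fraction
   field), independence puts all its coefficients in P, and dividing the relation by pi
   again and again contradicts Krull.
   Every finitely generated DG-submodule is the D-span of at most r|G| elements, so the
   socle {a | pi a = 0} of any submodule has rank at most r|G| modulo P.  For a descending
   chain B_i the ranks of the layers {a | pi a = 0} inside pi^k B_i are thus bounded and
   nonincreasing in i and in k, hence constant in i from some N on, uniformly in k; and a
   submodule of a P-module is determined by its socle layers, so the chain is constant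
   from N on. *)

Section Ideals.
Variable D : idomainType.
Implicit Types (I : D -> Prop) (x y : D).

Lemma ideal0 I : ideal I -> I 0. Proof. by case. Qed.

Lemma idealB I x y : ideal I -> I x -> I y -> I (x - y).
Proof. by case=> _ + _; apply. Qed.

Lemma idealMl I r x : ideal I -> I x -> I (r * x).
Proof. by case=> _ _; apply. Qed.

Lemma idealMr I r x : ideal I -> I x -> I (x * r).
Proof. by rewrite mulrC; apply: idealMl. Qed.

Lemma idealN I x : ideal I -> I x -> I (- x).
Proof. by move=> hI hx; rewrite -sub0r; apply: idealB => //; apply: ideal0. Qed.

Lemma idealD I x y : ideal I -> I x -> I y -> I (x + y).
Proof. by move=> hI hx hy; rewrite -[y]opprK; apply: idealB => //; apply: idealN. Qed.

Lemma ideal_sum I n (F : 'I_n -> D) :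
  ideal I -> (forall i, I (F i)) -> I (\sum_(i < n) F i).
Proof.
move=> hI hF; elim/big_ind: _ => //; first exact: ideal0 hI.
by move=> a b; apply: idealD.
Qed.

Lemma ideal_colon I y : ideal I -> ideal (fun d => I (d * y)).
Proof.
move=> hI; split; first by rewrite mul0r; apply: ideal0.
- by move=> a b ha hb; rewrite mulrBl; apply: idealB.
- by move=> c a ha; rewrite -mulrA; apply: idealMl.
Qed.

Lemma ideal_gen_nth (s : seq D) i : (i < size s)%N -> ideal_gen s s`_i.
Proof.
move=> hi; exists [seq (j == i)%:R | j <- iota 0 (size s)].
rewrite (bigD1 (Ordinal hi)) //= big1 ?addr0 => [|j /negbTE hj].
  by rewrite (nth_map 0%N) ?size_iota // nth_iota // eqxx mul1r.
have hji : (nat_of_ord j == i) = false.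
  by rewrite -hj; apply/eqP/eqP => [ji|->]; first exact: val_inj.
by rewrite (nth_map 0%N) ?size_iota // nth_iota // hji mul0r.
Qed.

Lemma ideal_gen_min (s : seq D) I : ideal I ->
  (forall i, (i < size s)%N -> I s`_i) -> forall x, ideal_gen s x -> I x.
Proof. by move=> hI hs x [c ->]; apply: ideal_sum => // i; apply: idealMl => //; apply: hs. Qed.

Hypothesis noethD : noetherian_ring D.

Lemma noetherian_acc (I : nat -> D -> Prop) :
  (forall n, ideal (I n)) -> (forall n x, I n x -> I n.+1 x) ->
  exists K, forall x, I K.+1 x -> I K x.
Proof.
move=> hI hS.
have mono n k x : (n <= k)%N -> I n x -> I k x.
  by move/subnK <-; elim: (k - n)%N => //= j ih /ih /hS.
pose U x := exists n, I n x.
have hU : ideal U.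
  split; first by exists 0%N; apply: ideal0.
  - move=> a b [n ha] [k hb]; exists (maxn n k).
    by apply: idealB; [|apply: mono (leq_maxl n k) ha|apply: mono (leq_maxr n k) hb].
  - by move=> c a [n ha]; exists n; apply: idealMl.
have [s hs] := noethD hU.
have [K hK] : exists K, forall i, (i < size s)%N -> I K s`_i.
  suff: forall k, (k <= size s)%N -> exists K, forall i, (i < k)%N -> I K s`_i.
    by apply.
  elim=> [|k ih] hk; first by exists 0%N.
  have [K hK] := ih (ltnW hk).
  have [n hn] : U s`_k by apply/hs/ideal_gen_nth.
  exists (maxn K n) => i; rewrite ltnS leq_eqVlt => /predU1P[->|hi].
    exact: mono (leq_maxr K n) hn.
  exact: mono (leq_maxl K n) (hK i hi).
exists K => x hx; apply: (ideal_gen_min (hI K) hK).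
by apply/hs; exists K.+1.
Qed.

Lemma noetherian_maximal (T : Type) (good : T -> Prop) (J : T -> D -> Prop) t0 :
  (forall t, ideal (J t)) -> good t0 ->
  exists2 t, good t & forall t', good t' -> (forall d, J t d -> J t' d) ->
    forall d, J t' d -> J t d.
Proof.
move=> hJ good0; apply: contrapT => nomax.
have /choice[F hF] : forall t, exists t', good t ->
    [/\ good t', forall d, J t d -> J t' d & exists2 d, J t' d & ~ J t d].
  move=> t; have [gt|ngt] := EM (good t); last by exists t.
  apply: contrapT => nobig; apply: nomax; exists t => // t' gt' sub d hd.
  apply: contrapT => nd; apply: nobig; exists t' => _; split=> //; by exists d.
pose u n := iter n F t0.
have good_u n : good (u n) by elim: n => //= n /hF[].
have [K hK] : exists K, forall d, J (u K.+1) d -> J (u K) d.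
  by apply: noetherian_acc => // n; have [] := hF _ (good_u n).
by have [_ _ [d /hK]] := hF _ (good_u K).
Qed.
End Ideals.

Local Notation tofrac := (@FracField.tofrac _).
Local Notation "x %:F" := (tofrac x).

Section FractionField.
Variable D : idomainType.

Lemma frac_clear_denom (x : {fraction D}) : exists a b, b != 0 /\ x * b%:F = a%:F.
Proof.
set r := generic_quotient.repr x; exists r.1, r.2; split; first exact: denom_ratioP.
have -> : x = generic_quotient.pi _ r by rewrite generic_quotient.reprK.
unlock FracField.tofrac; rewrite /GRing.mul /= -FracField.pi_mul.
apply/eqmodP; rewrite /= FracField.equivfE /FracField.mulf.
by rewrite !numden_Ratio ?mulf_neq0 ?oner_neq0 ?denom_ratioP // !mulr1 mulrC.
Qed.

Lemma row_clear_denom n (v : 'rV[{fraction D}]_n) :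
  exists2 b, b != 0 & exists d : 'rV[D]_n, map_mx tofrac d = b%:F *: v.
Proof.
have /fin_all_exists[ab hab] : forall j : 'I_n,
    exists ab : D * D, ab.2 != 0 /\ v 0 j * ab.2%:F = ab.1%:F.
  by move=> j; have [a [b hab]] := frac_clear_denom (v 0 j); exists (a, b).
exists (\prod_j (ab j).2); first by apply/prodf_neq0 => j _; case: (hab j).
exists (\row_j ((ab j).1 * \prod_(l | l != j) (ab l).2)); apply/rowP => j.
by rewrite !mxE [in RHS](bigD1 j) //= !tofracM -(hab j).2; ring.
Qed.

Lemma mx_ker_nontrivial n m (X : 'M[D]_(n, m)) :
  (m < n)%N -> exists2 d : 'rV[D]_n, d != 0 & d *m X = 0.
Proof.
move=> ltmn; pose XF := map_mx tofrac X.
have : kermx XF != 0.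
  rewrite kermx_eq0; apply/negP => /eqP rkXF.
  by move: (rank_leq_col XF); rewrite rkXF leqNgt ltmn.
case/rowV0Pn => v /sub_kermxP vXF v0.
have [b b0 [d dE]] := row_clear_denom v.
exists d.
  apply: contraNneq v0 => d0; move: dE; rewrite d0 map_mx0 => /esym/eqP.
  by rewrite scaler_eq0 tofrac_eq0 (negbTE b0).
apply/matrixP => a c; apply/eqP; rewrite [X in _ == X]mxE -tofrac_eq0.
have := congr1 (fun Y : 'M_(1, m) => Y a c) (map_mxM tofrac d X).
by rewrite /= dE -scalemxAl vXF scaler0 !mxE => <-.
Qed.

Lemma eigenvalue_integral k (N : 'M[D]_k) (v : 'rV_k) (w : {fraction D}) :
  integrally_closed D -> v != 0 -> v *m map_mx tofrac N = w *: v ->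
  exists d, w = d%:F.
Proof.
move=> intD v0 eigv; apply: intD; exists (char_poly N); split.
  exact: char_poly_monic.
rewrite map_char_poly -eigenvalue_root_char; apply/eigenvalueP; by exists v.
Qed.

End FractionField.

Section MaximalIdeal.
Variables (D : idomainType) (P : D -> Prop).
Hypothesis maxP : maximal_ideal P.

Lemma P_ideal : ideal P. Proof. by case: maxP => [[]]. Qed.

Lemma notP1 : ~ P 1. Proof. by case: maxP => [[]]. Qed.

Lemma notP_comaximal a : ~ P a -> exists p e, P p /\ 1 = p + e * a.
Proof.
move=> Pa; pose J x := exists p e, P p /\ x = p + e * a.
have idealJ : ideal J.
  split; first by exists 0, 0; rewrite mul0r addr0; split=> //; apply: ideal0 P_ideal.
  - move=> _ _ [p [e [Pp ->]]] [q [f [Pq ->]]]; exists (p - q), (e - f).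
    by split; [apply: idealB P_ideal Pp Pq | rewrite mulrBl opprD addrACA].
  - move=> c _ [p [e [Pp ->]]]; exists (c * p), (c * e).
    by split; [apply: idealMl P_ideal Pp | rewrite mulrDr mulrA].
have PJ x : P x -> J x by exists x, 0; rewrite mul0r addr0.
case: (maxP.2 J idealJ PJ) => [JP|//]; case: Pa; apply/JP.
by exists 0, 1; rewrite add0r mul1r; split=> //; apply: ideal0 P_ideal.
Qed.

Lemma P_prime a b : P (a * b) -> P a \/ P b.
Proof.
move=> Pab; have [Pa|/notP_comaximal[p [e [Pp e1]]]] := EM (P a); [by left | right].
rewrite -[b]mul1r e1 mulrDl -mulrA.
by apply: idealD P_ideal _ _; [apply: idealMr P_ideal Pp | apply: idealMl P_ideal _].
Qed.

Lemma notP_mul a b : ~ P a -> ~ P b -> ~ P (a * b).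
Proof. by move=> Pa Pb /P_prime[]. Qed.

Lemma notP_prod I (r : seq I) (Q : pred I) (F : I -> D) :
  (forall i, ~ P (F i)) -> ~ P (\prod_(i <- r | Q i) F i).
Proof. by move=> PF; elim/big_ind: _ => //; [apply: notP1 | apply: notP_mul]. Qed.

(* [dvd_loc x y] : x divides y in the localization of D at P. *)
Definition dvd_loc (x y : D) := exists s f, ~ P s /\ s * y = f * x.

Lemma dvd_loc_ideal x : ideal (dvd_loc x).
Proof.
split; first by exists 1, 0; rewrite mulr0 mul0r; split=> //; apply: notP1.
- move=> a b [s [f [Ps sa]]] [t [g [Pt tb]]]; exists (s * t), (t * f - s * g).
  split; first exact: notP_mul.
  have -> : s * t * (a - b) = t * (s * a) - s * (t * b) by ring.
  by rewrite sa tb; ring.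
- move=> c a [s [f [Ps sa]]]; exists s, (c * f); split=> //.
  by rewrite mulrCA sa mulrA.
Qed.

Lemma dvd_loc_refl x : dvd_loc x x.
Proof. by exists 1, 1; split=> //; apply: notP1. Qed.

Lemma dvd_loc_trans x y z : dvd_loc x y -> dvd_loc y z -> dvd_loc x z.
Proof.
move=> [s [f [Ps sy]]] [t [g [Pt tz]]]; exists (s * t), (g * f).
by split; [apply: notP_mul | rewrite -mulrA tz mulrCA sy mulrA].
Qed.

Lemma dvd_loc_mul2r c x y : c != 0 -> dvd_loc (x * c) (y * c) -> dvd_loc x y.
Proof.
move=> c0 [s [f [Ps syc]]]; exists s, f; split=> //.
by apply: (mulIf c0); rewrite -!mulrA.
Qed.

Definition uniformizer pi := P pi /\ forall p, P p -> dvd_loc pi p.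

Lemma uniformizer_neq0 pi p : uniformizer pi -> P p -> p != 0 -> pi != 0.
Proof.
move=> [_ hpi] /hpi[s [f [Ps sp]]] p0; apply/eqP => pi0; apply: Ps.
move: sp; rewrite pi0 mulr0 => /eqP; rewrite mulf_eq0 (negbTE p0) orbF => /eqP ->.
exact: ideal0 P_ideal.
Qed.

Lemma mx_ker_descent n m (X : 'M[D]_(n, m)) pi : uniformizer pi -> pi != 0 ->
  (forall d : 'rV_n, d *m X = 0 -> forall i, P (d 0 i)) ->
  forall d : 'rV_n, d *m X = 0 ->
  exists U (d' : 'rV_n), [/\ ~ P U, d' *m X = 0 & U *: d = pi *: d'].
Proof.
move=> [_ hpi] pi0 kerP d dX.
have /fin_all_exists[ue hue] : forall i, exists ue : D * D,
    ~ P ue.1 /\ ue.1 * d 0 i = ue.2 * pi.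
  by move=> i; have [u [e hue]] := hpi _ (kerP d dX i); exists (u, e).
pose U := \prod_i (ue i).1.
pose d' : 'rV_n := \row_i ((ue i).2 * \prod_(l | l != i) (ue l).1).
have UE : U *: d = pi *: d'.
  apply/rowP => i; have -> : U = (ue i).1 * \prod_(l | l != i) (ue l).1 by rewrite /U (bigD1 i).
  by rewrite !mxE mulrAC (hue i).2; ring.
exists U, d'; split=> //; first by apply: notP_prod => i; case: (hue i).
have : pi *: (d' *m X) = 0 by rewrite scalemxAl -UE -scalemxAl dX scaler0.
by move/eqP; rewrite scalemx_eq0 (negbTE pi0) => /eqP.
Qed.

Lemma colon_eq_P x Y :
  (forall I : D -> Prop, prime_ideal I -> (exists z, I z /\ z != 0) -> maximal_ideal I) ->
  x != 0 -> ~ dvd_loc x Y ->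
  (forall Y', ~ dvd_loc x Y' -> (forall d, dvd_loc x (d * Y) -> dvd_loc x (d * Y')) ->
     forall d, dvd_loc x (d * Y') -> dvd_loc x (d * Y)) ->
  forall d, P d <-> dvd_loc x (d * Y).
Proof.
move=> dim1 x0 xY maxY.
have colon_sub d : dvd_loc x (d * Y) -> P d.
  move=> [s [f [Ps sdY]]]; apply: contrapT => Pd; apply: xY.
  by exists (s * d), f; split; [apply: notP_mul | rewrite -mulrA].
have colon_prime : prime_ideal (fun d => dvd_loc x (d * Y)).
  split; first by split; [apply: ideal_colon (dvd_loc_ideal x) | rewrite mul1r].
  move=> a b abY; have [|aY] := EM (dvd_loc x (a * Y)); [by left | right].
  apply: (maxY (a * Y) aY _ b) => [d dY|]; last by rewrite mulrA [b * a]mulrC.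
  by rewrite mulrA [d * a]mulrC -mulrA; apply: idealMl (dvd_loc_ideal x) dY.
have colon_nz : exists z, dvd_loc x (z * Y) /\ z != 0.
  by exists x; split=> //; rewrite mulrC; apply: idealMl (dvd_loc_ideal x) (dvd_loc_refl x).
have [_ maxcolon] := dim1 _ colon_prime colon_nz.
case: (maxcolon P P_ideal colon_sub) => [PE d|/notP1[]].
by split=> [/PE|/colon_sub].
Qed.

Section Noetherian.
Hypothesis noethD : noetherian_ring D.

Lemma dvd_loc_of_integral x Y : integrally_closed D -> P x -> x != 0 ->
  (forall p, P p -> exists s f, [/\ ~ P s, P f & s * (p * Y) = f * x]) ->
  dvd_loc x Y.
Proof.
move=> intD Px x0 PY; have [ps psP] := noethD P_ideal; pose k := size ps.
have Pps (j : 'I_k) : P ps`_j by apply/psP/ideal_gen_nth.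
have /fin_all_exists[sc hsc] : forall j : 'I_k, exists sc : D * seq D,
    ~ P sc.1 /\ sc.1 * (ps`_j * Y) = (\sum_(l < k) sc.2`_l * ps`_l) * x.
  move=> j; have [s [f [Ps /(psP f).1[c fE] sY]]] := PY _ (Pps j).
  by exists (s, c); rewrite /= -fE.
pose S := \prod_j (sc j).1; pose S' j := \prod_(l | l != j) (sc l).1.
have SE j : S = (sc j).1 * S' j by rewrite /S (bigD1 j).
pose N : 'M[D]_k := \matrix_(l, j) (S' j * (sc j).2`_l).
(* Determinant trick: (S Y) / x is an eigenvalue of N, with the generators of P as
   eigenvector. *)
pose v : 'rV_k := \row_j (ps`_j)%:F.
pose w := (S * Y)%:F / x%:F.
have eigv : v *m map_mx tofrac N = w *: v.
  apply/rowP => j; rewrite !mxE.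
  have NE : \sum_(l < k) ps`_l * (S' j * (sc j).2`_l) = S' j * \sum_(l < k) (sc j).2`_l * ps`_l.
    by rewrite mulr_sumr; apply: eq_bigr => l _; ring.
  have jE : (\sum_(l < k) ps`_l * (S' j * (sc j).2`_l)) * x = S * Y * ps`_j.
    by rewrite NE -mulrA -(hsc j).2 (SE j); ring.
  rewrite (eq_bigr (fun l : 'I_k => (ps`_l * (S' j * (sc j).2`_l))%:F)); last first.
    by move=> l _; rewrite !mxE [RHS]tofracM.
  by rewrite -rmorph_sum /w mulrAC -tofracM -jE tofracM mulfK // tofrac_eq0.
have v0 : v != 0.
  apply: contra_neq x0 => v0; have [c ->] := (psP x).1 Px.
  apply: big1 => j _; have := congr1 (fun u : 'rV_k => u 0 j) v0.
  by rewrite !mxE => /eqP; rewrite tofrac_eq0 => /eqP ->; rewrite mulr0.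
have [d wE] := eigenvalue_integral intD v0 eigv.
exists S, d; split; first by apply: notP_prod => j; case: (hsc j).
by apply/eqP; rewrite -tofrac_eq !tofracM -wE /w !tofracM mulfVK // tofrac_eq0.
Qed.

Lemma not_dvd_loc_exp pi v : P pi -> pi != 0 -> v != 0 ->
  ~ (forall k, dvd_loc (pi ^+ k) v).
Proof.
move=> Ppi pi0 v0 divv.
have [K hK] : exists K, forall d, dvd_loc v (d * pi ^+ K.+1) -> dvd_loc v (d * pi ^+ K).
  apply: noetherian_acc => // [k|k d]; first exact: ideal_colon (dvd_loc_ideal v).
  by rewrite exprSr mulrA; apply: idealMr (dvd_loc_ideal v).
have [U [e [PU Uv]]] := divv K.+1.
have [u [f [Pu ueK]]] : dvd_loc v (e * pi ^+ K).
  by apply: hK; exists 1, U; rewrite mul1r Uv; split=> //; apply: notP1.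
have U0 : U != 0 by apply: contra_notN PU => /eqP ->; apply: ideal0 P_ideal.
have e0 : e != 0 by apply: contraNneq (mulf_neq0 U0 v0) => e0; rewrite Uv e0 mul0r.
have : u * U * (e * pi ^+ K) = f * pi * (e * pi ^+ K).
  transitivity (U * (u * (e * pi ^+ K))); first by ring.
  rewrite ueK; transitivity (f * (U * v)); first by ring.
  by rewrite Uv exprSr; ring.
move/(mulIf (mulf_neq0 e0 (expf_neq0 K pi0))) => uUf.
by apply: (notP_mul Pu PU); rewrite uUf; apply: idealMl P_ideal Ppi.
Qed.

Lemma mx_ker_P_eq0 n m (X : 'M[D]_(n, m)) pi : uniformizer pi ->
  (forall d : 'rV_n, d *m X = 0 -> forall i, P (d 0 i)) ->
  forall d : 'rV_n, d *m X = 0 -> d = 0.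
Proof.
move=> upi kerP d dX; apply/rowP => i; rewrite mxE; apply/eqP.
apply: contrapT => /negP di0; have pi0 := uniformizer_neq0 upi (kerP d dX i) di0.
apply: (not_dvd_loc_exp upi.1 pi0 di0) => k.
have [U [d' [PU _ Ud]]] : exists U (d' : 'rV_n),
    [/\ ~ P U, d' *m X = 0 & U *: d = pi ^+ k *: d'].
  elim: k => [|k [U [d' [PU d'X Ud]]]].
    by exists 1, d; rewrite !scale1r; split=> //; apply: notP1.
  have [V [d'' [PV d''X Vd']]] := mx_ker_descent upi pi0 kerP d'X.
  exists (V * U), d''; split=> //; first exact: notP_mul.
  by rewrite -scalerA Ud scalerA mulrC -scalerA Vd' scalerA -exprSr.
exists U, (d' 0 i); split=> //.
by have := congr1 (fun u : 'rV_n => u 0 i) Ud; rewrite !mxE [_ * d' 0 i]mulrC.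
Qed.

End Noetherian.

Lemma dedekind_uniformizer : dedekind_domain D -> exists pi, uniformizer pi.
Proof.
move=> [noethD intD dim1].
have [[x [Px x0]]|P0] := EM (exists x, P x /\ x != 0); last first.
  exists 0; split=> [|p Pp]; first exact: ideal0 P_ideal.
  have -> : p = 0 by apply: contrapT => /eqP p0; apply: P0; exists p.
  exact: dvd_loc_refl.
have x1 : ~ dvd_loc x 1.
  by move=> [s [f [Ps s1]]]; apply: Ps; rewrite -[s]mulr1 s1; apply: idealMl P_ideal Px.
have [Y xY maxY] := noetherian_maximal noethD
  (good := fun Y => ~ dvd_loc x Y) (fun Y => ideal_colon Y (dvd_loc_ideal x)) x1.
have PE := colon_eq_P dim1 x0 xY maxY.
have Y0 : Y != 0 by apply: contra_notN xY => /eqP ->; apply: ideal0 (dvd_loc_ideal x).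
(* Y/x is the inverse of a uniformizer: either some p0 Y/x is a unit of D_P, or
   (Y/x) P D_P is contained in P D_P, and then Y/x is integral over D, hence in D_P. *)
have [[p0 [Pp0 p0Yx]]|noP0] := EM (exists p0, P p0 /\ dvd_loc (p0 * Y) x).
  exists p0; split=> // p /PE pY.
  by apply: dvd_loc_mul2r Y0 _; apply: dvd_loc_trans p0Yx pY.
case: xY; apply: dvd_loc_of_integral => // p Pp.
have [s [f [Ps sY]]] := (PE p).1 Pp; exists s, f; split=> //.
by apply: contrapT => Pf; apply: noP0; exists p; split=> //; exists f, s; rewrite sY.
Qed.

End MaximalIdeal.

Section Stabilization.
Local Open Scope nat_scope.

Lemma nonincreasing_stable (u : nat -> nat) :
  (forall i j, i <= j -> u j <= u i) -> exists N, forall i, N <= i -> u i = u N.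
Proof.
move=> hu; have [b ub] : exists b, u 0 <= b by exists (u 0).
elim: b u hu ub => [|b IH] u hu ub.
  have u0 : u 0 = 0 by apply/eqP; rewrite -leqn0.
  by exists 0 => i _; apply/eqP; rewrite u0 -leqn0 -u0 hu.
have [const|/existsNP[i0 /eqP ui0]] := EM (forall i, u i = u 0); first by exists 0.
have lt0 : u i0 < u 0 by rewrite ltn_neqAle ui0 hu.
have hu' i j : i <= j -> u (i0 + j) <= u (i0 + i) by move=> ij; apply: hu; rewrite leq_add2l.
have [N hN] := IH _ hu' (leq_trans (hu _ _ (leq_addr 0 i0)) (leq_trans lt0 ub)).
exists (i0 + N) => i iN; have i0i := leq_trans (leq_addr N i0) iN.
by rewrite -(subnKC i0i) hN // leq_subRL.
Qed.

Lemma downset_stable (Q : nat -> nat -> bool) :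
  (forall i i' k k', i <= i' -> k <= k' -> Q i' k' -> Q i k) ->
  exists N, forall i, N <= i -> Q i =1 Q N.
Proof.
move=> antiQ.
have [allQ|/existsNP[i0 /existsNP[k0 /negP nQ]]] := EM (forall i k, Q i k).
  by exists 0 => i _ k; rewrite !allQ.
have ex i : exists k, ~~ Q (i0 + i) k.
  by exists k0; apply: contra nQ; apply: antiQ (leq_addr _ _) (leqnn _).
pose t i := ex_minn (ex i).
have QE i k : Q (i0 + i) k = (k < t i).
  rewrite /t; case: ex_minnP => ti nQti tmin; apply/idP/idP => [Qk|kti].
    by rewrite ltnNge; apply: contra nQti => tik; apply: antiQ (leqnn _) tik Qk.
  by apply: contraTT kti; rewrite -leqNgt; apply: tmin.
have t_mono i j : i <= j -> t j <= t i.
  move=> ij; rewrite leqNgt -QE; apply/negP => Qj.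
  by have := antiQ (i0 + i) _ (t i) _ _ (leqnn _) Qj; rewrite QE ltnn leq_add2l => /(_ ij).
have [N tN] := nonincreasing_stable t_mono.
exists (i0 + N) => i iN k; have i0i := leq_trans (leq_addr N i0) iN.
by rewrite -(subnKC i0i) !QE tN // leq_subRL.
Qed.

Lemma antitone2_stable (f : nat -> nat -> nat) m :
  (forall i i' k k', i <= i' -> k <= k' -> f i' k' <= f i k) ->
  (forall i k, f i k <= m) ->
  exists N, forall i, N <= i -> forall k, f i k = f N k.
Proof.
move=> antif fm.
have [N hN] : exists N, forall j, j <= m ->
    forall i, N <= i -> forall k, (j <= f i k) = (j <= f N k).
  elim: m {fm} => [|b [N hN]]; first by exists 0 => j; rewrite leqn0 => /eqP-> i _ k.
  have [N' hN'] := downset_stable (Q := fun i k => b.+1 <= f i k)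
    (fun i i' k k' ii' kk' bf => leq_trans bf (antif _ _ _ _ ii' kk')).
  exists (maxn N N') => j; rewrite leq_eqVlt => /predU1P[->|jb] i iN k.
    by rewrite hN' ?(leq_trans (leq_maxr N N')) // -(hN' (maxn N N')) ?leq_maxr.
  by rewrite hN ?(leq_trans (leq_maxl N N')) // -(hN j jb (maxn N N')) ?leq_maxl.
exists N => i iN k; apply/eqP.
by rewrite eqn_leq -(hN _ (fm i k) i iN k) leqnn (hN _ (fm N k) i iN k) leqnn.
Qed.
End Stabilization.

Section Modules.
Variables (D : idomainType) (A : lmodType D) (P : D -> Prop) (pi : D).
Hypotheses (maxP : maximal_ideal P) (noethD : noetherian_ring D).
Hypothesis upi : uniformizer P pi.

Definition Dspan (Y : seq A) (a : A) :=
  exists c : 'I_(size Y) -> D, a = \sum_j c j *: Y`_j.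

Lemma Dspan_Dsubmodule Y : Dsubmodule (Dspan Y).
Proof.
split; first by exists (fun=> 0); rewrite big1 // => j _; rewrite scale0r.
- move=> _ _ [c ->] [c' ->]; exists (fun j => c j + c' j).
  by rewrite -big_split; apply: eq_bigr => j _; rewrite scalerDl.
- move=> d _ [c ->]; exists (fun j => d * c j).
  by rewrite scaler_sumr; apply: eq_bigr => j _; rewrite scalerA.
Qed.

Lemma Dspan_mem Y y : y \in Y -> Dspan Y y.
Proof.
rewrite -index_mem => yY; exists (fun j => (j == Ordinal yY)%:R).
rewrite (bigD1 (Ordinal yY)) //= eqxx scale1r nth_index -?index_mem //.
by rewrite big1 ?addr0 // => j /negbTE->; rewrite scale0r.
Qed.

Lemma Dsubmodule_sum (W : A -> Prop) n (F : 'I_n -> A) :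
  Dsubmodule W -> (forall i, W (F i)) -> W (\sum_(i < n) F i).
Proof. by case=> W0 WD _ WF; elim/big_ind: _. Qed.

Definition P_free (zs : seq A) := forall c : nat -> D,
  \sum_(i < size zs) c i *: zs`_i = 0 -> forall i, (i < size zs)%N -> P (c i).

Lemma P_free_Dspan Y zs : P_free zs ->
  (forall i, (i < size zs)%N -> Dspan Y zs`_i) -> (size zs <= size Y)%N.
Proof.
move=> free spanzs; rewrite leqNgt; apply/negP => ltYz; pose n := size zs.
have /fin_all_exists[xs hxs] : forall i : 'I_n,
    exists c : 'I_(size Y) -> D, zs`_i = \sum_j c j *: Y`_j.
  by move=> i; apply: spanzs.
pose X : 'M[D]_(n, size Y) := \matrix_(i, j) xs i j.
have kerP (d : 'rV_n) : d *m X = 0 -> forall i, P (d 0 i).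
  move=> dX i; pose c k := if (insub k : option 'I_n) is Some j then d 0 j else 0.
  have cE (j : 'I_n) : c j = d 0 j by rewrite /c valK.
  rewrite -cE; apply: free (ltn_ord i).
  transitivity (\sum_j (d *m X) 0 j *: Y`_j).
    under eq_bigr => i' _ do rewrite cE (hxs i') scaler_sumr.
    rewrite exchange_big; apply: eq_bigr => j _; rewrite !mxE scaler_suml.
    by apply: eq_bigr => i' _; rewrite scalerA mxE.
  by rewrite dX big1 // => j _; rewrite mxE scale0r.
have [d d0 dX] := mx_ker_nontrivial X ltYz.
by case/eqP: d0; apply: (mx_ker_P_eq0 maxP noethD upi kerP dX).
Qed.

Hypothesis PmodA : P_module A P.

Lemma P_module_exp (a : A) p : P p -> exists n, p ^+ n *: a = 0.
Proof.
move=> Pp; have [n hn] := PmodA a; exists n.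
have := hn (nseq n p) (size_nseq n p); rewrite big_nseq iter_mulr_1; apply.
by move=> q; rewrite mem_nseq => /andP[_ /eqP->].
Qed.

Lemma notP_scale_unit (a : A) s : ~ P s -> exists c, (c * s) *: a = a.
Proof.
move=> Ps; have [p [e [Pp ps1]]] := notP_comaximal maxP Ps.
have [n pna] := P_module_exp a Pp; exists (e * \sum_(i < n) p ^+ i).
have -> : e * (\sum_(i < n) p ^+ i) * s = 1 - p ^+ n.
  have es : e * s = 1 - p by rewrite ps1 addrC addKr.
  by rewrite mulrAC es -[1 - _ ^+ n]opprB subrX1; ring.
by rewrite scalerBl pna subr0 scale1r.
Qed.

Lemma notP_scale_inj s (a : A) : ~ P s -> s *: a = 0 -> a = 0.
Proof.
by move=> Ps sa; have [c <-] := notP_scale_unit a Ps; rewrite -scalerA sa scaler0.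
Qed.

Lemma socle_scale_P d (z : A) : pi *: z = 0 -> P d -> d *: z = 0.
Proof.
move=> piz /upi.2[s [f [Ps sd]]]; apply: (notP_scale_inj Ps).
by rewrite scalerA sd -scalerA piz scaler0.
Qed.

Definition socle_free zs := P_free zs /\ forall i, (i < size zs)%N -> pi *: zs`_i = 0.

Definition socle_free_in (W : A -> Prop) zs :=
  socle_free zs /\ forall i, (i < size zs)%N -> W zs`_i.

Lemma socle_free_rcons (W : A -> Prop) zs w : Dsubmodule W -> socle_free_in W zs ->
  ~ W w -> pi *: w = 0 -> socle_free (rcons zs w).
Proof.
move=> Wsub [[free soc] inW] Ww piw; split; last first.
  move=> i; rewrite size_rcons ltnS nth_rcons leq_eqVlt => /predU1P[->|lti].
    by rewrite ltnn eqxx.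
  by rewrite lti soc.
move=> c; rewrite size_rcons big_ord_recr /= nth_rcons ltnn eqxx.
under eq_bigr => i _ do rewrite nth_rcons ltn_ord.
move=> rel; have Pcw : P (c (size zs)).
  apply: contrapT => Pc; apply: Ww; have [u <-] := notP_scale_unit w Pc.
  rewrite -scalerA; have -> : c (size zs) *: w = - \sum_(i < size zs) c i *: zs`_i.
    by apply/eqP; rewrite -addr_eq0 addrC rel.
  case: (Wsub) => _ _ WZ; rewrite -scaleN1r; apply/WZ/WZ.
  by apply: Dsubmodule_sum => // i; apply/WZ/inW.
move: rel; rewrite (socle_scale_P piw Pcw) addr0 => /free Pc i.
by rewrite ltnS leq_eqVlt => /predU1P[->|/Pc].
Qed.

Definition socle_layer (B : A -> Prop) k z :=
  pi *: z = 0 /\ exists2 b, B b & z = pi ^+ k *: b.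

Lemma socle_layer_Dsubmodule B k : Dsubmodule B -> Dsubmodule (socle_layer B k).
Proof.
case=> B0 BD BZ; split; first by split; [rewrite scaler0 | exists 0; rewrite ?scaler0].
- move=> x y [pix [b Bb xE]] [piy [b' Bb' yE]].
  split; first by rewrite scalerDr pix piy addr0.
  by exists (b + b'); [apply: BD | rewrite scalerDr xE yE].
- move=> d x [pix [b Bb xE]]; split; first by rewrite scalerA mulrC -scalerA pix scaler0.
  by exists (d *: b); [apply: BZ | rewrite xE !scalerA mulrC].
Qed.

Lemma socle_layers_sub (B B' : A -> Prop) : Dsubmodule B -> Dsubmodule B' ->
  (forall x, B' x -> B x) -> (forall k z, socle_layer B k z -> socle_layer B' k z) ->
  forall x, B x -> B' x.
Proof.
move=> [_ BD BZ] [B'0 B'D _] sub layers x Bx; have [n pinx] := P_module_exp x upi.1.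
elim: n x Bx pinx => [|n IH] x Bx; first by rewrite expr0 scale1r => ->.
rewrite exprS -scalerA => pinx.
have [_ [b' B'b' nb']] := layers n _ (conj pinx (ex_intro2 _ _ x Bx erefl)).
have B'xb : B' (x - b').
  apply: IH; last by rewrite scalerBr -nb' subrr.
  by rewrite -scaleN1r; apply/BD/BZ/sub.
by rewrite -(subrK b' x); apply: B'D.
Qed.

Section SocleRank.
Variable m : nat.
Hypothesis socle_free_size : forall zs, socle_free zs -> (size zs <= m)%N.

Definition socle_rank (W : A -> Prop) :=
  \max_(k < m.+1 | `[< exists2 zs, socle_free_in W zs & size zs = k >]) k.

Lemma socle_rank_le W : (socle_rank W <= m)%N.
Proof. by apply/bigmax_leqP => k _; rewrite -ltnS. Qed.

Lemma socle_rank_ge W zs : socle_free_in W zs -> (size zs <= socle_rank W)%N.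
Proof.
move=> Wzs; have ltzm : (size zs < m.+1)%N by rewrite ltnS socle_free_size //; case: Wzs.
by apply: (leq_bigmax_cond (Ordinal ltzm)); apply/asboolP; exists zs.
Qed.

Lemma socle_rank_attained W : exists2 zs, socle_free_in W zs & size zs = socle_rank W.
Proof.
have : (0 < #|[pred k : 'I_m.+1 | `[< exists2 zs, socle_free_in W zs & size zs = k >]]|)%N.
  apply/card_gt0P; exists ord0; apply/asboolP; exists [::]; last by [].
  split; first split.
  - by move=> c _ i; rewrite ltn0.
  - by move=> i; rewrite ltn0.
  - by move=> i; rewrite ltn0.
case/(eq_bigmax_cond (fun k : 'I_m.+1 => nat_of_ord k)) => k /asboolP[zs Wzs zsk] rk.
have -> : socle_rank W = k := rk.
by exists zs.
Qed.

Lemma socle_rank_mono (W W' : A -> Prop) :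
  (forall z, W z -> W' z) -> (socle_rank W <= socle_rank W')%N.
Proof.
move=> sub; have [zs [free inW] <-] := socle_rank_attained W.
by apply: socle_rank_ge; split=> // i /inW /sub.
Qed.

Lemma socle_rank_lt (W W' : A -> Prop) w : Dsubmodule W -> (forall z, W z -> W' z) ->
  W' w -> ~ W w -> pi *: w = 0 -> (socle_rank W < socle_rank W')%N.
Proof.
move=> Wsub sub W'w Ww piw; have [zs Wzs <-] := socle_rank_attained W.
rewrite -(size_rcons zs w); apply: socle_rank_ge; split.
  exact: socle_free_rcons Wsub Wzs Ww piw.
move=> i; rewrite size_rcons ltnS nth_rcons leq_eqVlt => /predU1P[->|lti].
  by rewrite ltnn eqxx.
by rewrite lti; apply/sub/Wzs.2.
Qed.

Lemma artinian_of_socle_free_bounded : artinian_Dmodule A.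
Proof.
move=> B Bsub Bdec.
have Bmono i j : (i <= j)%N -> forall x, B j x -> B i x.
  by move/subnK <-; elim: (j - i)%N => //= n IH x /Bdec /IH.
pose f i k := socle_rank (socle_layer (B i) k).
have antif i i' k k' : (i <= i')%N -> (k <= k')%N -> (f i' k' <= f i k)%N.
  move=> ii' kk'; apply: socle_rank_mono => z [piz [b Bb zE]]; split=> //.
  exists (pi ^+ (k' - k) *: b); last by rewrite zE scalerA -exprD subnKC.
  by case: (Bsub i) => _ _ BZ; apply/BZ/(Bmono _ _ ii').
have [N fN] := antitone2_stable antif (fun i k => socle_rank_le _).
exists N => i Ni x; split; first exact: Bmono.
apply: socle_layers_sub (Bsub N) (Bsub i) (Bmono _ _ Ni) _ x => k z zN.
apply: contrapT => zi.
have sub y : socle_layer (B i) k y -> socle_layer (B N) k y.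
  by case=> piy [b Bb yE]; split=> //; exists b => //; apply: Bmono Ni _ Bb.
have := socle_rank_lt (socle_layer_Dsubmodule k (Bsub i)) sub zN zi zN.1.
by rewrite -/(f i k) -/(f N k) fN // ltnn.
Qed.

End SocleRank.
End Modules.

Section DGModules.
Variables (gT : finGroupType) (D : idomainType) (A : lmodType D) (act : gT -> A -> A).
Hypothesis DGact : DG_module act.

Lemma act0 g : act g 0 = 0.
Proof.
case: DGact => actD _ _ _; apply: (addrI (act g 0)).
by rewrite -actD !addr0.
Qed.

Lemma act_sum g n (F : 'I_n -> A) : act g (\sum_(i < n) F i) = \sum_(i < n) act g (F i).
Proof. by case: DGact => actD _ _ _; apply: (big_morph (act g) (actD g) (act0 g)). Qed.

Definition DGorbit (t : seq A) := [seq act g w | g <- enum gT, w <- t].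

Lemma size_DGorbit t : size (DGorbit t) = (#|gT| * size t)%N.
Proof. by rewrite size_allpairs cardE. Qed.

Lemma DGgen_Dspan t a : DGgen act t a -> Dspan (DGorbit t) a.
Proof.
case: DGact => _ actZ act1 actM; have spanD := Dspan_Dsubmodule (DGorbit t).
apply; first split=> // g _ [c ->].
  rewrite act_sum; apply: Dsubmodule_sum => // j.
  rewrite actZ; case: spanD => _ _; apply; apply: Dspan_mem.
  have /allpairsP[[h w] [hh tw ->]] := mem_nth 0 (ltn_ord j).
  by rewrite /= -actM; apply: allpairs_f; rewrite ?mem_enum.
by move=> w tw; apply: Dspan_mem; rewrite -[w]act1; apply: allpairs_f; rewrite ?mem_enum.
Qed.

End DGModules.

Theorem lemma6 (gT : finGroupType) (D : idomainType) (A : lmodType D)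
    (act : gT -> A -> A) (P : D -> Prop) (r : nat) :
  dedekind_domain D ->
  [pchar D] =i pred0 ->
  DG_module act ->
  maximal_ideal P ->
  P_module A P ->
  quot_char0 P ->
  special_rank_DG act r ->
  artinian_Dmodule A.
Proof.
move=> dedD _ DGact maxP PmodA _ [rank_r _].
have noethD : noetherian_ring D by case: dedD.
have [pi upi] := dedekind_uniformizer maxP dedD.
apply: (artinian_of_socle_free_bounded maxP upi PmodA (m := r * #|gT|)).
move=> zs [free _]; have [t [size_t gen]] := rank_r zs.
apply: leq_trans (P_free_Dspan maxP noethD upi free _) _ => [i lti|].
  by apply/(DGgen_Dspan DGact)/gen => B _; apply; apply: mem_nth.
by rewrite size_DGorbit mulnC leq_mul2r size_t orbT.
Qed.
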